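(* Let $X$ and $Y$ be nontrivial real Banach spaces. (a) If $X$ is locally octahedral, then $X\oplus_1 Y$ is locally octahedral. (b) If $X$ and $Y$ are locally octahedral and $1<p\leq\infty$, then $X\oplus_p Y$ is locally octahedral. (c) If $X\oplus_p Y$ is locally octahedral, where $1<p\leq\infty$, then $X$ is locally octahedral.
   Context: For $1\le p<\infty$, $X\oplus_p Y$ is $X\times Y$ with norm $\|(x,y)\|_p=(\|x\|^p+\|y\|^p)^{1/p}$; $X\oplus_\infty Y$ has norm $\max\{\|x\|,\|y\|\}$. A Banach space $Z$ is locally octahedral if for every $z\in Z$ and every $\varepsilon>0$ there is a $w\in S_Z$ (unit sphere) such that $\|sz+w\|\geq(1-\varepsilon)(|s|\|z\|+\|w\|)$ for all $s\in\mathbb{R}$. *)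

From HB Require Import structures.
From mathcomp Require Import all_boot all_order all_algebra.
From mathcomp Require Import all_classical all_reals all_analysis.
Set Implicit Arguments. Unset Strict Implicit. Unset Printing Implicit Defensive.
Import Order.TTheory GRing.Theory Num.Theory numFieldNormedType.Exports.
Local Open Scope ring_scope.

Definition loh_norm (R : realType) (V : lmodType R) (N : V -> R) : Prop :=
  forall (z : V) (eps : R), 0 < eps ->
    exists w : V, N w = 1 /\
      forall s : R, N (s *: z + w) >= (1 - eps) * (`|s| * N z + N w).

Definition locally_octahedral (R : realType) (X : normedModType R) : Prop :=
  @loh_norm R X (fun x => `|x|).

(* The p-norm on X x Y, p in [1, +oo] encoded as an extended real:
   p = r%:E gives (|x|^r + |y|^r)^(1/r), p = +oo gives max(|x|,|y|). *)
Definition psum_norm (R : realType) (X Y : normedModType R) (p : \bar R)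
  (z : (X * Y)%type) : R :=
  match p with
  | r%:E => (`|z.1| `^ r + `|z.2| `^ r) `^ r^-1
  | _ => Num.max `|z.1| `|z.2|
  end.

Definition locally_octahedral_psum (R : realType) (X Y : normedModType R)
  (p : \bar R) : Prop :=
  @loh_norm R (X * Y)%type (psum_norm p).

Definition nontrivial (R : realType) (X : normedModType R) : Prop :=
  exists x : X, x != 0.

(* For (a) and (b), a witness for [z = (x, y)] is built from witnesses [u] for [x]
   and [v] for [y], rescaled to [(al u, be v)] with [(al, be)] the direction of
   [(|x|, |y|)]: the norm of X (+)_p Y is a monotone, positively homogeneous function
   of [(|x|, |y|)], so the two one-dimensional inequalities add up along this
   direction (for p = 1 the witness [(u, 0)] already works).
   For (c), local octahedrality of X (+)_p Y at [(x, 0)] gives a unit [(u, v)] with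
   [|(s x + u, v)|_p >= (1 - e') (|s| |x| + 1)].  For p < oo, strict convexity of
   l_p^2 at [(1, 0)], tested at [s = 1/|x|], forces [|v|] small and [|u|] close to 1,
   so [u] almost satisfies the inequality; for p = oo the inequality for
   [|s| |x| >= 1] cannot be carried by [|v| <= 1], and the triangle inequality
   extends it to all [s].  In both cases [u / |u|] is the required witness. *)

From HB Require Import structures.
From mathcomp Require Import all_boot all_order all_algebra.
From mathcomp Require Import all_classical all_reals all_analysis.
From mathcomp Require Import ring lra.
Set Implicit Arguments. Unset Strict Implicit. Unset Printing Implicit Defensive.
Import Order.TTheory GRing.Theory Num.Theory numFieldNormedType.Exports.
Local Open Scope ring_scope.

Section reductions.
Variable R : realType.

Lemma loh_norm_lt1 (V : lmodType R) (N : V -> R) : (forall v, 0 <= N v) ->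
  (forall z eps, 0 < eps < 1 -> exists w, N w = 1 /\
     forall s : R, (1 - eps) * (`|s| * N z + N w) <= N (s *: z + w)) ->
  loh_norm N.
Proof.
move=> N_ge0 LN z eps eps_gt0.
have [|w [Nw1 Hw]] := LN z (Num.min eps 2^-1).
  by rewrite lt_min gt_min eps_gt0 invr_gt0 ltr0n invf_lt1 ?ltr1n ?orbT.
exists w; split=> // s; apply: le_trans (Hw s).
by rewrite ler_wpM2r ?addr_ge0 ?mulr_ge0 // lerB // ge_min lexx.
Qed.

Lemma locally_octahedral_nonzero (X : normedModType R) : nontrivial X ->
  (forall (x : X) eps, x != 0 -> 0 < eps < 1 -> exists w : X, `|w| = 1 /\
     forall s : R, (1 - eps) * (`|s| * `|x| + `|w|) <= `|s *: x + w|) ->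
  locally_octahedral X.
Proof.
move=> [x0 x0_neq0] LX; apply: loh_norm_lt1 => // x eps /andP[eps_gt0 eps_lt1].
have [->|x_neq0] := eqVneq x 0; last by apply: LX; rewrite ?eps_gt0.
exists (`|x0|^-1 *: x0); rewrite normfZV //; split=> // s.
by rewrite scaler0 add0r normr0 mulr0 add0r normfZV // mulr1; lra.
Qed.

End reductions.

Section lpnorm2.
Variable R : realType.

Lemma powRK (p a : R) : 0 < p -> 0 <= a -> (a `^ p) `^ p^-1 = a.
Proof. by move=> p_gt0 a_ge0; rewrite -powRrM mulfV ?gt_eqF // powRr1. Qed.

Lemma powRVK (p a : R) : 0 < p -> 0 <= a -> (a `^ p^-1) `^ p = a.
Proof. by move=> p_gt0 a_ge0; rewrite -powRrM mulVf ?gt_eqF // powRr1. Qed.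

Lemma lt1r_powR (a r : R) : 1 < a -> 1 < r -> a < a `^ r.
Proof.
move=> a_gt1 r_gt1; have a_gt0 : 0 < a by apply: lt_trans a_gt1.
rewrite /powR gt_eqF // -{1}(lnK a_gt0) ltr_expR ltr_pMl ?ln_gt0 //.
Qed.

Lemma powR_le_id (a p : R) : 0 <= a <= 1 -> 1 <= p -> a `^ p <= a.
Proof.
case/andP; rewrite le_eqVlt => /predU1P[<- _ p_ge1|a_gt0 a_le1 p_ge1].
  by rewrite powR0 // gt_eqF // (lt_le_trans ltr01).
by rewrite ge1r_powR ?a_gt0.
Qed.

Lemma powR_convex_mid (p x y : R) : 1 <= p -> 0 <= x -> 0 <= y ->
  2 * (x + y) `^ p <= 2 `^ p * (x `^ p + y `^ p).
Proof.
move=> p_ge1 x_ge0 y_ge0.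
have half_ge0 : (0 : R) <= 2^-1 by rewrite invr_ge0.
have half_le1 : (2^-1 : R) <= 1 by rewrite invf_le1 ?ler1n.
have -> : x + y = 2 * (2^-1 * x + (1 - 2^-1) * y) by field.
rewrite powRM ?addr_ge0 ?mulr_ge0 ?subr_ge0 // mulrCA ler_wpM2l ?powR_ge0 //.
have mid : (2^-1 * x + (1 - 2^-1) * y) `^ p <=
    2^-1 * x `^ p + (1 - 2^-1) * y `^ p.
  by apply: (convex_powR p_ge1 (Itv01 half_ge0 half_le1));
    rewrite inE /= in_itv /= ?x_ge0 ?y_ge0.
lra.
Qed.

Definition lpnorm2 (p a b : R) := (a `^ p + b `^ p) `^ p^-1.

Lemma lpnorm2_ge0 (p a b : R) : 0 <= lpnorm2 p a b.
Proof. exact: powR_ge0. Qed.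

Lemma lpnorm2_powR (p a b : R) : 0 < p ->
  lpnorm2 p a b `^ p = a `^ p + b `^ p.
Proof. by move=> p_gt0; rewrite powRVK // addr_ge0 ?powR_ge0. Qed.

Lemma lpnorm2Z (p mu a b : R) : 0 < p -> 0 <= mu -> 0 <= a -> 0 <= b ->
  lpnorm2 p (mu * a) (mu * b) = mu * lpnorm2 p a b.
Proof.
move=> p_gt0 mu_ge0 a_ge0 b_ge0.
by rewrite /lpnorm2 !powRM // -mulrDr powRM ?addr_ge0 ?powR_ge0 // powRK.
Qed.

Lemma ler_lpnorm2 (p a b a' b' : R) : 0 < p -> 0 <= a <= a' -> 0 <= b <= b' ->
  lpnorm2 p a b <= lpnorm2 p a' b'.
Proof.
move=> p_gt0 /andP[a_ge0 aa'] /andP[b_ge0 bb'].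
have a'_ge0 := le_trans a_ge0 aa'; have b'_ge0 := le_trans b_ge0 bb'.
apply: ge0_ler_powR; rewrite ?invr_ge0 ?(ltW p_gt0) ?nnegrE ?addr_ge0 ?powR_ge0 //.
by rewrite lerD // ge0_ler_powR ?(ltW p_gt0).
Qed.

Lemma lpnorm2_r0 (p a : R) : 0 < p -> 0 <= a -> lpnorm2 p a 0 = a.
Proof. by move=> p_gt0 a_ge0; rewrite /lpnorm2 powR0 ?gt_eqF // addr0 powRK. Qed.

Lemma lpnorm2_0r (p b : R) : 0 < p -> 0 <= b -> lpnorm2 p 0 b = b.
Proof. by move=> p_gt0 b_ge0; rewrite /lpnorm2 powR0 ?gt_eqF // add0r powRK. Qed.

(* [a^p = a * a^(p-1) <= a * (a+b)^(p-1)], and likewise for [b]. *)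
Lemma lpnorm2_le_add (p a b : R) : 1 <= p -> 0 <= a -> 0 <= b ->
  lpnorm2 p a b <= a + b.
Proof.
move=> p_ge1 a_ge0 b_ge0; have p_gt0 : 0 < p by apply: lt_le_trans p_ge1.
have ab_ge0 := addr_ge0 a_ge0 b_ge0.
have le_ab c : 0 <= c <= a + b -> c `^ p <= c * (a + b) `^ (p - 1).
  case/andP=> c_ge0 c_le; rewrite -mulr_powRB1 // ler_wpM2l //.
  by apply: ge0_ler_powR; rewrite ?subr_ge0 ?nnegrE.
rewrite -[leRHS](powRK p_gt0 ab_ge0); apply: ge0_ler_powR;
  rewrite ?invr_ge0 ?(ltW p_gt0) ?nnegrE ?addr_ge0 ?powR_ge0 //.
rewrite -[leRHS](mulr_powRB1 ab_ge0 p_gt0) mulrDl.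
by rewrite lerD // le_ab ?lerDl ?lerDr ?a_ge0 ?b_ge0.
Qed.

Lemma lpnorm2_ge_l (p a b : R) : 0 < p -> 0 <= a -> 0 <= b -> a <= lpnorm2 p a b.
Proof.
move=> p_gt0 a_ge0 b_ge0; rewrite -[leLHS](lpnorm2_r0 p_gt0 a_ge0).
by rewrite ler_lpnorm2 ?a_ge0 ?lexx ?b_ge0.
Qed.

(* Midpoint convexity of [t^r] at [1] and [al] gives [2 (1+al)^r <= 2^r (1 + al^r)]. *)
Lemma lpnorm2_shift_bound (r al be c : R) : 1 <= r -> 0 <= al -> 0 <= be ->
  0 <= c -> lpnorm2 r al be = 1 -> c * 2 <= lpnorm2 r (1 + al) be ->
  be `^ r * (2 `^ r - 2) <= 2 * 2 `^ r * (1 - c `^ r).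
Proof.
move=> r_ge1 al_ge0 be_ge0 c_ge0 unit shift; have r_gt0 := lt_le_trans ltr01 r_ge1.
have sum1 : al `^ r + be `^ r = 1 by rewrite -lpnorm2_powR // unit powR1.
have cvx := powR_convex_mid r_ge1 ler01 al_ge0; rewrite powR1 in cvx.
have : (c * 2) `^ r <= (1 + al) `^ r + be `^ r.
  rewrite -lpnorm2_powR //; apply: ge0_ler_powR => //;
    by rewrite ?nnegrE ?(ltW r_gt0) ?lpnorm2_ge0 ?mulr_ge0.
rewrite powRM // => le_shift; clear unit shift.
have := congr1 (fun t => 2 `^ r * t) sum1; rewrite /= mulrDr mulr1 => sumP.
lra.
Qed.

(* Strict convexity of l_r^2 at [(1, 0)]: a unit vector [(al, be)] such that
   [(1 + al, be)] has norm close to [2] is close to [(1, 0)]. *)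
Lemma exists_lpnorm2_near_e1 (r eps : R) : 1 < r -> 0 < eps < 1 ->
  exists2 c, 0 <= c < 1 & forall al be, 0 <= al -> 0 <= be ->
    lpnorm2 r al be = 1 -> c * 2 <= lpnorm2 r (1 + al) be ->
    1 - eps <= c - be - (1 - al).
Proof.
move=> r_gt1 /andP[eps_gt0 eps_lt1]; have r_gt0 := lt_trans ltr01 r_gt1.
set d := eps / 4; have d_gt0 : 0 < d by rewrite divr_gt0.
have d_le1 : d <= 1 by rewrite /d; lra.
have K_gt0 : 0 < 2 `^ r - 2 by rewrite subr_gt0 lt1r_powR ?ltr1n.
have P_gt0 : 0 < 2 * 2 `^ r by rewrite mulr_gt0 ?powR_gt0.
set m := Num.min (eps / 2) (d `^ r * (2 `^ r - 2) / (2 * 2 `^ r)).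
have m_gt0 : 0 < m by rewrite lt_min !divr_gt0 ?mulr_gt0 ?powR_gt0.
have m_le : m <= eps / 2 by rewrite ge_min lexx.
have mK : 2 * 2 `^ r * m <= d `^ r * (2 `^ r - 2).
  by rewrite -ler_pdivlMl // mulrC ge_min lexx orbT.
have m'_gt0 : 0 < 1 - m by lra.
have c_ge : 1 - m <= (1 - m) `^ r^-1.
  by rewrite ger1_powR ?invf_le1 ?(ltW r_gt1) // m'_gt0 gerBl ltW.
exists ((1 - m) `^ r^-1).
  rewrite powR_ge0 /=; have := @gt0_ltr_powR R r^-1 _ (1 - m) 1.
  by rewrite powR1 invr_gt0 !nnegrE; apply; lra.
move=> al be al_ge0 be_ge0 unit shift.
have := lpnorm2_shift_bound (ltW r_gt1) al_ge0 be_ge0 (powR_ge0 _ _) unit shift.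
rewrite powRVK ?(ltW m'_gt0) //.
rewrite opprB addrCA subrr addr0 => beK.
have be_r : be `^ r <= d `^ r.
  by rewrite -(ler_pM2r K_gt0); apply: le_trans beK mK.
have be_le : be <= d.
  rewrite leNgt; apply/negP => /(gt0_ltr_powR r_gt0); rewrite !nnegrE.
  by move=> /(_ (ltW d_gt0) be_ge0); rewrite ltNge be_r.
have al_le1 : al <= 1 by rewrite -unit lpnorm2_ge_l.
have sum1 : al `^ r + be `^ r = 1 by rewrite -lpnorm2_powR // unit powR1.
have d_r : d `^ r <= d by rewrite powR_le_id ?(ltW d_gt0) ?d_le1 ?(ltW r_gt1).
have al_r : al `^ r <= al by rewrite powR_le_id ?al_ge0 ?al_le1 ?(ltW r_gt1).
clear unit shift beK mK; rewrite /d in be_le d_r; lra.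
Qed.

End lpnorm2.

Section normed.
Variables (R : realType) (X : normedModType R).

Lemma lower_bound_scale (x u : X) (c al : R) : c <= 1 -> 0 <= al ->
  (forall s : R, c * (`|s| * `|x| + 1) <= `|s *: x + u|) ->
  forall s : R, c * (`|s| * `|x| + al) <= `|s *: x + al *: u|.
Proof.
move=> c_le1 al_ge0 bound s; have [->|al_neq0] := eqVneq al 0.
  rewrite scale0r !addr0 normrZ -[leRHS]mul1r ler_wpM2r ?mulr_ge0 //.
have al_gt0 : 0 < al by rewrite lt0r al_neq0.
have -> : s *: x + al *: u = al *: ((s / al) *: x + u).
  by rewrite scalerDr scalerA mulrCA mulfV // mulr1.
rewrite normrZ ger0_norm //; apply: le_trans (ler_wpM2l al_ge0 (bound _)).
rewrite normrM normfV (ger0_norm al_ge0).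
by rewrite [leRHS](_ : _ = c * (`|s| * `|x| + al)) //; field.
Qed.

(* For [|s| |x| < 1], compare with the point [s1] of the same sign and [|s1| |x| = 1]. *)
Lemma lower_bound_extend (x u : X) (c : R) : x != 0 -> c <= 1 ->
  (forall s : R, 1 <= `|s| * `|x| -> c * (`|s| * `|x| + 1) <= `|s *: x + u|) ->
  forall s : R, c * (`|s| * `|x| + 1) - (1 - c) <= `|s *: x + u|.
Proof.
move=> x_neq0 c_le1 bound s; have a_gt0 : 0 < `|x| by rewrite normr_gt0.
set a := `|x| in a_gt0 bound *; set t := `|s| * a.
have [t_ge1|t_lt1] := leP 1 t.
  by apply: le_trans (bound s t_ge1); rewrite lerBlDr lerDl subr_ge0.
set sg : R := (-1) ^+ (s < 0)%R.
have sgE : s = sg * `|s| := numEsign s.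
have s1_far : 1 <= `|sg / a| * a.
  by rewrite normrM normr_sign mul1r normfV (gtr0_norm a_gt0) mulVf ?gt_eqF.
have -> : s *: x + u = (sg / a *: x + u) + (s - sg / a) *: x.
  by rewrite scalerBl addrAC addrCA subrr addr0.
apply: le_trans (lerB_normD _ _); rewrite normrZ -/a.
have -> : `|s - sg / a| * a = 1 - t.
  rewrite {1}sgE -mulrBr normrM normr_sign mul1r distrC ger0_norm; last first.
    by rewrite subr_ge0 -(ler_pM2r a_gt0) mulVf ?gt_eqF // ltW.
  by rewrite mulrBl mulVf ?gt_eqF.
have := bound _ s1_far; rewrite normrM normr_sign mul1r normfV (gtr0_norm a_gt0).
rewrite mulVf ?gt_eqF // => b1.
have t_ge0 : 0 <= t := mulr_ge0 (normr_ge0 s) (ltW a_gt0).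
nra.
Qed.

Lemma loh_of_lower_bound (x u : X) (c e eps : R) : `|u| <= 1 -> 0 <= e ->
  eps < 1 -> c <= 1 -> 1 - eps <= c - e - (1 - `|u|) ->
  (forall s : R, c * (`|s| * `|x| + 1) - e <= `|s *: x + u|) ->
  exists w : X, `|w| = 1 /\
    forall s : R, (1 - eps) * (`|s| * `|x| + `|w|) <= `|s *: x + w|.
Proof.
move=> u_le1 e_ge0 eps_lt1 c_le1 margin bound.
have u_gt0 : 0 < `|u| by lra.
have u_neq0 : u != 0 by rewrite -normr_gt0.
exists (`|u|^-1 *: u); rewrite normfZV //; split=> // s.
have -> : s *: x + `|u|^-1 *: u = (s *: x + u) + (`|u|^-1 - 1) *: u.
  by rewrite scalerBl scale1r addrA addrAC addrK.
apply: le_trans (lerB_normD _ _).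
rewrite normrZ ger0_norm ?subr_ge0 ?invf_ge1 // [X in _ <= _ - X]mulrBl mulVf ?gt_eqF //.
have := bound s; have t_ge0 : 0 <= `|s| * `|x| by rewrite mulr_ge0.
nra.
Qed.

End normed.

(* [nu] is an absolute normalized norm on R^2, seen on the positive quadrant;
   [lpnorm2 p] and [Num.max] are instances. *)
Section absolute_sum.
Variables (R : realType) (nu : R -> R -> R).
Hypothesis nu_mono : forall a b a' b' : R, 0 <= a <= a' -> 0 <= b <= b' ->
  nu a b <= nu a' b'.
Hypothesis nuZ : forall mu a b : R, 0 <= mu -> 0 <= a -> 0 <= b ->
  nu (mu * a) (mu * b) = mu * nu a b.
Hypothesis nu10 : nu 1 0 = 1.
Hypothesis nu01 : nu 0 1 = 1.

Lemma nu_ge_l (a b : R) : 0 <= a -> 0 <= b -> a <= nu a b.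
Proof.
move=> a_ge0 b_ge0; rewrite -[leLHS]mulr1 -nu10 -nuZ // mulr1 mulr0.
by rewrite nu_mono ?lexx ?a_ge0.
Qed.

Lemma nu_ge_r (a b : R) : 0 <= a -> 0 <= b -> b <= nu a b.
Proof.
move=> a_ge0 b_ge0; rewrite -[leLHS]mulr1 -nu01 -nuZ // mulr1 mulr0.
by rewrite nu_mono ?lexx ?b_ge0.
Qed.

Lemma nu_polar (a b : R) : 0 <= a -> 0 <= b -> exists al be : R,
  [/\ 0 <= al, 0 <= be, nu al be = 1, a = nu a b * al & b = nu a b * be].
Proof.
move=> a_ge0 b_ge0; have [nu0|nu_neq0] := eqVneq (nu a b) 0.
  have a0 : a = 0 by apply/le_anti; rewrite a_ge0 -nu0 nu_ge_l.
  have b0 : b = 0 by apply/le_anti; rewrite b_ge0 -nu0 nu_ge_r.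
  by exists 1, 0; rewrite nu0 !mul0r ler01 lexx.
have nu_gt0 : 0 < nu a b by rewrite lt0r nu_neq0 (le_trans a_ge0) ?nu_ge_l.
exists (a / nu a b), (b / nu a b); split; rewrite ?divr_ge0 ?(ltW nu_gt0) //.
- by rewrite ![_ / nu a b]mulrC nuZ ?invr_ge0 ?(ltW nu_gt0) // mulVf.
- by rewrite mulrCA mulfV ?mulr1.
- by rewrite mulrCA mulfV ?mulr1.
Qed.

Variables (X Y : normedModType R).

(* With [(|x|, |y|) = |z| (al, be)], the witness [(al u, be v)] is aligned with [z]. *)
Lemma loh_absolute_sum : locally_octahedral X -> locally_octahedral Y ->
  loh_norm (fun z : X * Y => nu `|z.1| `|z.2|).
Proof.
move=> LX LY; apply: loh_norm_lt1 => [z|[x y] eps /andP[eps_gt0 eps_lt1]] /=.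
  exact: le_trans (nu_ge_l _ _).
have [al [be [al_ge0 be_ge0 nu1 xE yE]]] := nu_polar (normr_ge0 x) (normr_ge0 y).
have [u [u1 Hu]] := LX x eps eps_gt0; have [v [v1 Hv]] := LY y eps eps_gt0.
rewrite u1 in Hu; rewrite v1 in Hv.
have c_le1 : 1 - eps <= 1 by rewrite lerBlDr lerDl ltW.
exists (al *: u, be *: v); rewrite /= !normrZ u1 v1 !mulr1 !ger0_norm // nu1.
split=> // s; set Nz := nu `|x| `|y| in xE yE *.
have lb_ge0 (a t : R) : 0 <= a -> 0 <= t -> 0 <= (1 - eps) * (`|s| * a + t).
  move=> a_ge0 t_ge0; have c_ge0 : 0 <= 1 - eps by lra.
  exact: mulr_ge0 c_ge0 (addr_ge0 (mulr_ge0 (normr_ge0 s) a_ge0) t_ge0).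
have Nz_ge0 : 0 <= Nz := le_trans (normr_ge0 x) (nu_ge_l (normr_ge0 x) (normr_ge0 y)).
have -> : (1 - eps) * (`|s| * Nz + 1) =
    nu ((1 - eps) * (`|s| * `|x| + al)) ((1 - eps) * (`|s| * `|y| + be)).
  rewrite [in RHS]xE [in RHS]yE.
  have scale (t : R) :
      (1 - eps) * (`|s| * (Nz * t) + t) = (1 - eps) * (`|s| * Nz + 1) * t.
    by ring.
  by rewrite !scale nuZ ?lb_ge0 // nu1 mulr1.
by apply: nu_mono; rewrite lb_ge0 ?lower_bound_scale.
Qed.

End absolute_sum.

Section psum.
Variables (R : realType) (X Y : normedModType R).

Lemma psum_norm1 (z : X * Y) : psum_norm 1%:E z = `|z.1| + `|z.2|.
Proof. by rewrite /psum_norm invr1 !powRr1 // addr_ge0. Qed.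

Lemma psum_norm_l (p : \bar R) (x : X) : (0 < p)%E -> psum_norm p (x, 0 : Y) = `|x|.
Proof.
case: p => [r||] //= => [|_]; rewrite normr0; last exact/max_idPl.
by rewrite lte_fin => r_gt0; apply: lpnorm2_r0.
Qed.

Lemma loh_psum_left (p : \bar R) : (0 < p)%E -> locally_octahedral_psum X Y p ->
  forall (x : X) (e : R), 0 < e -> exists (u : X) (v : Y),
    psum_norm p (u, v) = 1 /\
    forall s : R, (1 - e) * (`|s| * `|x| + 1) <= psum_norm p (s *: x + u, v).
Proof.
move=> p_gt0 LXY x e e_gt0; have [[u v] [Nw H]] := LXY (x, 0) e e_gt0.
exists u, v; split=> // s; have := H s.
have -> : s *: (x, 0 : Y) + (u, v) = (s *: x + u, v).
  by rewrite [LHS]surjective_pairing /= scaler0 add0r.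
by rewrite [psum_norm p (x, 0)]psum_norm_l // Nw.
Qed.

Lemma locally_octahedral_psum1 :
  locally_octahedral X -> locally_octahedral_psum X Y 1%:E.
Proof.
move=> LX [x y] eps eps_gt0; have [u [u1 Hu]] := LX x eps eps_gt0.
exists (u, 0); split=> [|s]; rewrite !psum_norm1 /= normr0 addr0 ?u1 //.
rewrite addr0 normrZ; have := Hu s; rewrite u1.
have : 0 <= `|s| * `|y| by rewrite mulr_ge0.
nra.
Qed.

Lemma locally_octahedral_psum_gt1 (p : \bar R) : (1 < p)%E ->
  locally_octahedral X -> locally_octahedral Y -> locally_octahedral_psum X Y p.
Proof.
case: p => [r||] // p_gt1 LX LY.
  rewrite lte_fin in p_gt1; have r_gt0 := lt_trans ltr01 p_gt1.
  change (loh_norm (fun z : X * Y => lpnorm2 r `|z.1| `|z.2|)).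
  apply: (@loh_absolute_sum _ (lpnorm2 r) _ _ _ _ _ _ LX LY).
  - by move=> a b a' b'; apply: ler_lpnorm2.
  - by move=> mu a b; apply: lpnorm2Z.
  - exact: lpnorm2_r0.
  - exact: lpnorm2_0r.
change (loh_norm (fun z : X * Y => Num.max `|z.1| `|z.2|)).
apply: (@loh_absolute_sum _ Num.max _ _ _ _ _ _ LX LY).
- by move=> a b a' b' /andP[_ aa'] /andP[_ bb']; apply: le_max2.
- by move=> mu a b mu_ge0 _ _; rewrite maxr_pMr.
- exact/max_idPl.
- exact/max_idPr.
Qed.

Lemma locally_octahedral_of_psum_oo : nontrivial X ->
  locally_octahedral_psum X Y +oo%E -> locally_octahedral X.
Proof.
move=> nX LXY; apply: locally_octahedral_nonzero => // x eps x_neq0.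
case/andP=> eps_gt0 eps_lt1; set e := eps / 4.
have e_gt0 : 0 < e by rewrite divr_gt0.
have eps_e : eps = 4 * e by rewrite /e; lra.
have [u [v [uv1 near_x]]] := loh_psum_left lt0y LXY x e_gt0.
rewrite /psum_norm /= in uv1 near_x.
have u_le1 : `|u| <= 1 by rewrite -uv1 le_max lexx.
have v_le1 : `|v| <= 1 by rewrite -uv1 le_max lexx orbT.
have far s : 1 <= `|s| * `|x| -> (1 - e) * (`|s| * `|x| + 1) <= `|s *: x + u|.
  move=> t_ge1; have := near_x s; rewrite le_max => /orP[//|v_ge].
  have : (1 - e) * 2 <= (1 - e) * (`|s| * `|x| + 1) by rewrite ler_wpM2l; lra.
  lra.
have c_le1 : 1 - e <= 1 by lra.
have bound := lower_bound_extend x_neq0 c_le1 far.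
have := bound 0; rewrite normr0 mul0r add0r mulr1 scale0r add0r => u_ge.
apply: (loh_of_lower_bound (c := 1 - e) (e := 1 - (1 - e))) => //; lra.
Qed.

Lemma locally_octahedral_of_psum_fin (r : R) : 1 < r -> nontrivial X ->
  locally_octahedral_psum X Y r%:E -> locally_octahedral X.
Proof.
move=> r_gt1 nX LXY; have r_gt0 := lt_trans ltr01 r_gt1.
apply: locally_octahedral_nonzero => // x eps x_neq0 eps01.
have [c /andP[c_ge0 c_lt1] margin] := exists_lpnorm2_near_e1 r_gt1 eps01.
have c'_gt0 : 0 < 1 - c by rewrite subr_gt0.
have r_gt0E : (0 < r%:E)%E by rewrite lte_fin.
have [u [v [uv1 near_x]]] := loh_psum_left r_gt0E LXY x c'_gt0.
rewrite opprB addrCA subrr addr0 in near_x.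
change (lpnorm2 r `|u| `|v| = 1) in uv1.
change (forall s : R,
  c * (`|s| * `|x| + 1) <= lpnorm2 r `|s *: x + u| `|v|) in near_x.
have shift : c * 2 <= lpnorm2 r (1 + `|u|) `|v|.
  have two : `| `|x|^-1 | * `|x| + 1 = 2.
    by rewrite normfV normr_id mulVf ?normr_eq0 //; lra.
  have := near_x `|x|^-1; rewrite two => /le_trans; apply.
  apply: ler_lpnorm2 r_gt0 _ _; rewrite normr_ge0 ?lexx //=.
  by rewrite -(normfZV x_neq0) ler_normD.
have u_le1 : `|u| <= 1 by rewrite -[leRHS]uv1 lpnorm2_ge_l.
have bound s : c * (`|s| * `|x| + 1) - `|v| <= `|s *: x + u|.
  rewrite lerBlDr; apply: le_trans (near_x s) _.
  exact: lpnorm2_le_add (ltW r_gt1) (normr_ge0 _) (normr_ge0 _).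
have uv_margin := margin _ _ (normr_ge0 u) (normr_ge0 v) uv1 shift.
case/andP: eps01 => _ eps_lt1.
exact: loh_of_lower_bound u_le1 (normr_ge0 v) eps_lt1 (ltW c_lt1) uv_margin bound.
Qed.

End psum.

Theorem proposition4p1 (R : realType) (X Y : completeNormedModType R) :
  nontrivial X -> nontrivial Y ->
  (locally_octahedral X -> locally_octahedral_psum X Y 1%:E) /\
  (forall p : \bar R, (1%:E < p)%E ->
     locally_octahedral X -> locally_octahedral Y ->
     locally_octahedral_psum X Y p) /\
  (forall p : \bar R, (1%:E < p)%E ->
     locally_octahedral_psum X Y p -> locally_octahedral X).
Proof.
move=> nX _; split; first exact: locally_octahedral_psum1.
split; first exact: locally_octahedral_psum_gt1.
case=> [r||] // p_gt1; last exact: locally_octahedral_of_psum_oo.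
by rewrite lte_fin in p_gt1; apply: locally_octahedral_of_psum_fin.
Qed.
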